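(* Fix integers $d\ge1$, $k\ge2$ and $1\le t\le k-1$. Let $E$ be a set of $l$ unordered pairs $\{i,j\}$ of distinct indices in $\{1,\dots,k\}$ (so $l\le\binom{k}{2}$) such that every index $i$ lies in at most $t$ pairs of $E$. For every $\varepsilon>0$ there is a constant $C=C(\varepsilon,d,k)>0$ such that the following holds. Let $q$ be a prime power, $B$ a non-degenerate bilinear form on $\mathbb{F}_q^d$, and $\mathcal{A}_1,\dots,\mathcal{A}_k\subseteq\mathbb{F}_q^d$ with $|\mathcal{A}_i|\ge C\,q^{\frac{d-1}{2}+t}$ for all $i$. Then for any choice of $\lambda_{ij}\in\mathbb{F}_q^*$, $\{i,j\}\in E$, the number $S$ of tuples $(\mathbf{a}_1,\dots,\mathbf{a}_k)\in\mathcal{A}_1\times\cdots\times\mathcal{A}_k$ satisfying the system \[ B(\mathbf{a}_i,\mathbf{a}_j)=\lambda_{ij}\quad\text{for all }\{i,j\}\in E \] satisfies $\big|S-q^{-l}\prod_{i=1}^k|\mathcal{A}_i|\big|\le \varepsilon\, q^{-l}\prod_{i=1}^k|\mathcal{A}_i|$. (In asymptotic notation: if $|\mathcal{A}_i|\gg q^{\frac{d-1}{2}+t}$ then the system has $(1+o(1))q^{-l}\prod_i|\mathcal{A}_i|$ solutions.)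
   Context: $B:\mathbb{F}_q^d\times\mathbb{F}_q^d\to\mathbb{F}_q$ is bilinear and non-degenerate; for each pair $\{i,j\}\in E$ the equation is written with the index order $(i,j)$ fixed once and for all. $\mathbb{F}_q^*=\mathbb{F}_q\setminus\{0\}$. *)

From HB Require Import structures.
From mathcomp Require Import all_boot all_order all_algebra.
From Stdlib Require Import Reals.
Set Implicit Arguments. Unset Strict Implicit. Unset Printing Implicit Defensive.
Import GRing.Theory.

Local Open Scope ring_scope.

Definition is_bilinear_form (F : fieldType) (d : nat)
    (B : 'rV[F]_d -> 'rV[F]_d -> F) : Prop :=
  (forall (a : F) (x y z : 'rV[F]_d), B (a *: x + y) z = a * B x z + B y z) /\
  (forall (a : F) (x y z : 'rV[F]_d), B x (a *: y + z) = a * B x y + B x z).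

Definition is_nondegenerate (F : fieldType) (d : nat)
    (B : 'rV[F]_d -> 'rV[F]_d -> F) : Prop :=
  (forall x, (forall y, B x y = 0) -> x = 0) /\
  (forall y, (forall x, B x y = 0) -> y = 0).

(* E : a set of pairs of distinct indices, each unordered pair {i,j} listed once,
   with an orientation (i,j) fixed once and for all. *)
Definition valid_edges (k : nat) (E : {set 'I_k * 'I_k}) : Prop :=
  forall e, e \in E -> e.1 != e.2 /\ (e.2, e.1) \notin E.

Definition edge_deg (k : nat) (E : {set 'I_k * 'I_k}) (i : 'I_k) : nat :=
  #|[set e in E | (e.1 == i) || (e.2 == i)]|.

Definition num_solutions (F : finFieldType) (d k : nat)
    (B : 'rV[F]_d -> 'rV[F]_d -> F) (E : {set 'I_k * 'I_k})
    (lam : 'I_k * 'I_k -> F) (A : 'I_k -> {set 'rV[F]_d}) : nat :=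
  #|[set a : {ffun 'I_k -> 'rV[F]_d} |
      [forall i, a i \in A i] && [forall e in E, B (a e.1) (a e.2) == lam e]]|.

(* Writing N(X) for the number of solutions of the subsystem X of E and
   P = |A_1| ... |A_k|, we show |N(X) - P/q^|X|| <= (2|X|/C) P/q^|X| for every X
   contained in E, by strong induction on |X|.  Removing one edge e = (i,j) of X,
   the defect q N(X) - N(X \ e) is a sum of the centred indicator q [B(a_i,a_j) = lam] - 1
   over the solutions of X \ e.  These solutions factor as f(a) g(a), where f ignores a_i
   and g ignores a_j; Cauchy-Schwarz together with a variance bound for the level sets
   {y | B(x,y) = lam} of the non-degenerate form (distinct nonzero x give almost
   independent level sets) bounds the defect by the counts of the two systems obtained
   by deleting every edge at i, resp. at j.  Those have at most t fewer edges, so the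
   hypothesis |A_i| >= C q^((d-1)/2 + t) makes the defect small. *)

From HB Require Import structures.
From mathcomp Require Import all_boot all_order all_algebra.
From Stdlib Require Import Reals Lra Psatz.
Set Implicit Arguments. Unset Strict Implicit. Unset Printing Implicit Defensive.
Import GRing.Theory.
Delimit Scope nat_scope with N.
Delimit Scope ring_scope with ring.

(* Real addition and multiplication as monoid laws, so that the generic lemmas on
   \big operators apply to finite sums of reals. *)
Lemma Rplus_associative : associative Rplus.
Proof. by move=> x y z; rewrite Rplus_assoc. Qed.
HB.instance Definition _ :=
  Monoid.isComLaw.Build R 0%R Rplus Rplus_associative Rplus_comm Rplus_0_l.
HB.instance Definition _ := Monoid.isMulLaw.Build R 0%R Rmult Rmult_0_l Rmult_0_r.
HB.instance Definition _ :=
  Monoid.isAddLaw.Build R Rmult Rplus Rmult_plus_distr_r Rmult_plus_distr_l.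

Local Open Scope R_scope.

Section RealSums.
Variable I : finType.

Definition ind (b : bool) : R := if b then 1 else 0.

Lemma ind_ge0 b : 0 <= ind b. Proof. case: b => /=; lra. Qed.
Lemma ind_le1 b : ind b <= 1. Proof. case: b => /=; lra. Qed.
Lemma ind_idem b : ind b * ind b = ind b. Proof. case: b => /=; lra. Qed.
Lemma ind_andb a b : ind (a && b) = ind a * ind b.
Proof. by case: a; case: b => /=; lra. Qed.

Lemma rsum_le (F G : I -> R) :
  (forall i, F i <= G i) -> \big[Rplus/0]_i F i <= \big[Rplus/0]_i G i.
Proof.
move=> FG; apply: (big_ind2 (fun x y => x <= y)) => // [|*]; first lra.
exact: Rplus_le_compat.
Qed.

Lemma rsum_ge0 (F : I -> R) : (forall i, 0 <= F i) -> 0 <= \big[Rplus/0]_i F i.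
Proof.
move=> F0; apply: (big_ind (fun x => 0 <= x)) => // [|*]; first lra.
exact: Rplus_le_le_0_compat.
Qed.

Lemma rsum_ind (P : pred I) : \big[Rplus/0]_i ind (P i) = INR #|P|.
Proof.
rewrite -sum1_card (big_morph INR plus_INR (erefl (INR 0))) (big_mkcond P) /=.
by apply: eq_bigr => i _; rewrite /ind; case: (P i).
Qed.

Lemma rsum_const (c : R) : \big[Rplus/0]_(i : I) c = INR #|I| * c.
Proof.
rewrite (eq_bigr (fun i => ind (predT i) * c)) => [|i _]; last by rewrite /= Rmult_1_l.
by rewrite -big_distrl rsum_ind.
Qed.

Lemma rsum_sub (F G : I -> R) :
  \big[Rplus/0]_i (F i - G i) = \big[Rplus/0]_i F i - \big[Rplus/0]_i G i.
Proof.
rewrite (eq_bigr (fun i => F i + -1 * G i)) => [|i _]; last by ring.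
by rewrite big_split -big_distrr /=; ring.
Qed.

Lemma cauchy_schwarz (w g : I -> R) : (forall i, 0 <= w i) ->
  (\big[Rplus/0]_i (w i * g i)) ^ 2 <=
  \big[Rplus/0]_i w i * \big[Rplus/0]_i (w i * g i ^ 2).
Proof.
move=> w0; rewrite /index_enum; elim: (Finite.enum I) => [|a s IH].
  by rewrite !big_nil; lra.
rewrite !big_cons; set W := \big[Rplus/0]_(i <- s) w i in IH *.
set S := \big[Rplus/0]_(i <- s) _ in IH *; set Q := \big[Rplus/0]_(i <- s) _ in IH *.
have W0 : 0 <= W by apply: big_ind => //; [lra | move=> *; lra].
have Q0 : 0 <= Q.
  by apply: big_ind => // [|x y|i _]; [lra | lra | have := w0 i; nra].
have key : 2 * g a * S <= Q + W * g a ^ 2.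
  have [W_eq0|W_gt0] := Req_dec W 0.
    have S0 : S = 0 by rewrite W_eq0 Rmult_0_l in IH; nra.
    by rewrite S0 W_eq0 Rmult_0_l; lra.
  apply: (Rmult_le_reg_l W); first lra.
  have := pow2_ge_0 (W * g a - S); nra.
have := w0 a; nra.
Qed.

End RealSums.

Lemma card_fibre_translation (V : finZmodType) (W : finType) (g : V -> W) (w0 : W) :
  (forall w w', exists t, forall y, (g (y + t)%ring == w') = (g y == w)) ->
  #|V| = (#|W| * #|[set y | g y == w0]|)%nat.
Proof.
move=> transl; rewrite -[#|V|]sum1_card (partition_big g predT) //=.
have -> : #|W| = #|[pred w : W | predT w]| by apply: eq_card.
rewrite -sum_nat_const; apply: eq_bigr => w _; have [t Ht] := transl w w0.
rewrite sum1_card -(card_preimset _ (addIr t)); apply: eq_card => y.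
by rewrite !inE Ht.
Qed.

Section BilinearForm.
Local Open Scope ring_scope.
Variables (F : finFieldType) (d : nat) (B : 'rV[F]_d -> 'rV[F]_d -> F).
Hypothesis bil : is_bilinear_form B.
Hypothesis nd : is_nondegenerate B.
Implicit Types (x y u v : 'rV[F]_d) (a c lam : F).

Lemma BlinD x x' y : B (x + x') y = B x y + B x' y.
Proof. by have := bil.1 1 x x' y; rewrite scale1r mul1r. Qed.

Lemma BrinD x y y' : B x (y + y') = B x y + B x y'.
Proof. by have := bil.2 1 x y y'; rewrite scale1r mul1r. Qed.

Lemma B0l y : B 0 y = 0.
Proof. by apply: (addrI (B 0 y)); rewrite -BlinD !addr0. Qed.

Lemma B0r x : B x 0 = 0.
Proof. by apply: (addrI (B x 0)); rewrite -BrinD !addr0. Qed.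

Lemma BlinZ a x y : B (a *: x) y = a * B x y.
Proof. by have := bil.1 a x 0 y; rewrite addr0 B0l addr0. Qed.

Lemma BrinZ a x y : B x (a *: y) = a * B x y.
Proof. by have := bil.2 a x y 0; rewrite addr0 B0r addr0. Qed.

Lemma exists_pairing_one x : x != 0 -> exists y, B x y = 1.
Proof.
move=> nx; have [y Bxy] : exists y, B x y != 0.
  apply/existsP; apply: contraT; rewrite negb_exists => /forallP Bx0.
  by rewrite (nd.1 x (fun y => eqP (negbNE (Bx0 y)))) eqxx in nx.
by exists ((B x y)^-1 *: y); rewrite BrinZ mulVf.
Qed.

Lemma orthogonal_sub_multiple u v : v != 0 ->
  (forall y, B v y = 0 -> B u y = 0) -> exists c, u = c *: v.
Proof.
move=> nv sub; have [y0 Bvy0] := exists_pairing_one nv.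
exists (B u y0); apply/eqP; rewrite -subr_eq0; apply/eqP; apply: nd.1 => y.
have := sub ((- B v y) *: y0 + y).
rewrite !BrinD !BrinZ Bvy0 mulr1 addNr => /(_ erefl).
by rewrite BlinD -scaleNr BlinZ !mulNr mulrC addrC.
Qed.

Lemma separate_independent x x' : x != 0 -> ~~ [exists a : F, x' == a *: x] ->
  exists y, B x y = 1 /\ B x' y = 0.
Proof.
move=> nx nm.
have [y /andP [/eqP Bx'y Bxy]] : exists y, (B x' y == 0) && (B x y != 0).
  apply/existsP; apply: contraT; rewrite negb_exists => /forallP H.
  have nx' : x' != 0 by apply: contraNneq nm => ->; apply/existsP; exists 0; rewrite scale0r.
  have [c Hc] : exists c, x = c *: x'.
    apply: orthogonal_sub_multiple => // y Bx'y.
    by move: (H y); rewrite Bx'y eqxx negbK => /eqP.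
  have c0 : c != 0 by apply: contraNneq nx => c0; rewrite Hc c0 scale0r.
  move: nm; rewrite negb_exists => /forallP /(_ c^-1).
  by rewrite Hc scalerA mulVf // scale1r eqxx.
by exists ((B x y)^-1 *: y); rewrite !BrinZ mulVf // Bx'y mulr0.
Qed.

Lemma not_proportional_sym x x' : x != 0 ->
  ~~ [exists a : F, x' == a *: x] -> ~~ [exists a : F, x == a *: x'].
Proof.
move=> nx nm; apply/existsP => -[a /eqP Ex].
have a0 : a != 0 by apply: contraNneq nx => a0; rewrite Ex a0 scale0r.
by move/existsP: nm; apply; exists a^-1; rewrite Ex scalerA mulVf // scale1r.
Qed.

Lemma card_level_set x lam : x != 0 ->
  #|'rV[F]_d| = (#|F| * #|[set y | B x y == lam]|)%nat.
Proof.
move=> nx; have [y0 Bxy0] := exists_pairing_one nx.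
apply: card_fibre_translation => w w'; exists ((w' - w) *: y0) => y.
by rewrite BrinD BrinZ Bxy0 mulr1 addrA subr_eq [w' + w]addrC (inj_eq (addIr w')).
Qed.

Lemma card_level_set2 x x' lam : x != 0 -> x' != 0 -> ~~ [exists a : F, x' == a *: x] ->
  #|'rV[F]_d| = (#|F| * #|F| * #|[set y | (B x y == lam) && (B x' y == lam)]|)%nat.
Proof.
move=> nx nx' nm.
have [y1 [Bxy1 Bx'y1]] := separate_independent nx nm.
have [y2 [Bx'y2 Bxy2]] := separate_independent nx' (not_proportional_sym nx nm).
rewrite -card_prod.
have -> : #|[set y | (B x y == lam) && (B x' y == lam)]| =
          #|[set y | (B x y, B x' y) == (lam, lam)]| by apply: eq_card => y; rewrite !inE.
apply: card_fibre_translation => -[a b] [a' b'].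
exists ((a' - a) *: y1 + (b' - b) *: y2) => y /=.
rewrite !xpair_eqE !BrinD !BrinZ Bxy1 Bx'y1 Bxy2 Bx'y2 !mulr1 !mulr0 addr0 add0r.
by rewrite !addrA !subr_eq [a' + a]addrC [b' + b]addrC !(inj_eq (addIr _)).
Qed.

Lemma level_set_multiple_disjoint x a y lam : lam != 0 -> a != 1 ->
  B x y = lam -> B (a *: x) y != lam.
Proof.
move=> nl na Bxy; rewrite BlinZ Bxy; apply: contra na => /eqP aE.
by rewrite -(mulfK nl a) aE mulfV.
Qed.

End BilinearForm.

Lemma rsum_inset (V : finType) (S : {set V}) :
  \big[Rplus/0]_y ind (y \in S) = INR #|S|.
Proof. by rewrite rsum_ind; apply: f_equal; apply: eq_card. Qed.

Lemma card_ge1 (T : finType) (t : T) : 1 <= INR #|T|.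
Proof. by apply: (le_INR 1); apply/leP; apply/card_gt0P; exists t. Qed.

Lemma rsum_centered_product (V : finType) (q : R) (S S' : {set V}) :
  \big[Rplus/0]_y ((q * ind (y \in S) - 1) * (q * ind (y \in S') - 1)) =
  q * q * INR #|S :&: S'| - q * INR #|S| - q * INR #|S'| + INR #|V|.
Proof.
rewrite (eq_bigr (fun y => q * q * ind (y \in S :&: S') + - q * ind (y \in S)
                            + - q * ind (y \in S') + 1)) => [|y _]; last first.
  by rewrite in_setI ind_andb; ring.
rewrite !big_split /= -!big_distrr /= !rsum_inset rsum_const.
(* the two occurrences of #|V| differ in their coercion path; naming them unifies them *)
by set n := INR #|V|; ring.
Qed.

Section LevelSets.
Variables (F : finFieldType) (d : nat) (B : 'rV[F]_d -> 'rV[F]_d -> F) (lam : F).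
Hypothesis bil : is_bilinear_form B.
Hypothesis nd : is_nondegenerate B.
Hypothesis lam_neq0 : lam != 0%ring.
Implicit Types (x y : 'rV[F]_d).

Let q := INR #|F|.
Let Q := INR #|'rV[F]_d|.
Let level x := [set y | B x y == lam].

Lemma level_eq0 x : x = 0%ring -> level x = set0.
Proof. by move=> ->; apply/setP => y; rewrite !inE (B0l bil) eq_sym (negbTE lam_neq0). Qed.

Lemma card_level x : x != 0%ring -> q * INR #|level x| = Q.
Proof. by move=> nx; rewrite /q /Q (card_level_set bil nd lam nx) mult_INR. Qed.

Lemma card_level_pair x x' : x != 0%ring -> x' != 0%ring -> x != x' ->
  q * q * INR #|level x :&: level x'| <= Q.
Proof.
move=> nx nx' nxx.
case: (boolP [exists a : F, x' == (a *: x)%ring]) => [/existsP [a /eqP x'E]|nm].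
  have a_neq1 : a != 1%ring by apply: contraNneq nxx => a1; rewrite x'E a1 scale1r.
  suff -> : level x :&: level x' = set0 by rewrite cards0 /= Rmult_0_r; apply: pos_INR.
  apply/setP => y; rewrite !inE x'E; apply/negP => /andP [/eqP Bxy].
  by apply/negP; apply: level_set_multiple_disjoint.
rewrite /q /Q (card_level_set2 bil nd lam nx nx' nm) !mult_INR; right.
by congr (_ * INR _); apply: eq_card => y; rewrite !inE.
Qed.

Lemma level_correlation x x' :
  \big[Rplus/0]_y ((q * ind (B x y == lam) - 1) * (q * ind (B x' y == lam) - 1))
  <= q * Q * ind (x == x').
Proof.
have := rsum_centered_product q (level x) (level x').
rewrite (eq_bigr (fun y => (q * ind (B x y == lam) - 1) * (q * ind (B x' y == lam) - 1)))
  => [->|y _]; last by rewrite !inE.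
have q1 : 1 <= q by apply: card_ge1 0%ring.
have Q0 : 0 <= Q by apply: pos_INR.
have size0 z : z = 0%ring -> INR #|level z| = 0 by move/level_eq0 ->; rewrite cards0.
have [x0 x'0] := (size0 x, size0 x').
have [cx cx'] := (@card_level x, @card_level x').
have cxx' := @card_level_pair x x'.
have diag : x = x' -> INR #|level x :&: level x'| = INR #|level x| /\
                      INR #|level x'| = INR #|level x| by move=> <-; rewrite setIid.
have le1 : INR #|level x :&: level x'| <= INR #|level x|.
  by apply: le_INR; apply/leP; apply/subset_leq_card/subsetIl.
have le2 : INR #|level x :&: level x'| <= INR #|level x'|.
  by apply: le_INR; apply/leP; apply/subset_leq_card/subsetIr.
have ge0 : 0 <= INR #|level x :&: level x'| by apply: pos_INR.
rewrite -/Q; set c := INR #|level x| in x0 cx diag le1 *.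
set c' := INR #|level x'| in x'0 cx' diag le2 *.
set c12 := INR #|level x :&: level x'| in cxx' diag le1 le2 ge0 *.
have [/diag [-> ->]|nxx] := eqVneq x x'; rewrite /=.
  have [/x0 ->|/cx cxQ] := eqVneq x 0%ring; first by nra.
  have qqc : q * q * c = q * Q by rewrite -cxQ; ring.
  lra.
rewrite Rmult_0_r.
have [x_0|nx] := eqVneq x 0%ring.
  have nx' : x' != 0%ring by rewrite -x_0 eq_sym.
  by have := x0 x_0; have := cx' nx'; nra.
have [/x'0 c'0|nx'] := eqVneq x' 0%ring; first by have := cx nx; nra.
by have := cxx' nx nx' nxx; have := cx nx; have := cx' nx'; lra.
Qed.

Lemma level_variance (p : pred 'rV[F]_d) :
  \big[Rplus/0]_y (\big[Rplus/0]_x (ind (p x) * (q * ind (B x y == lam) - 1))) ^ 2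
  <= q * Q * \big[Rplus/0]_x ind (p x).
Proof.
set phi := fun x y => q * ind (B x y == lam) - 1.
rewrite (eq_bigr (fun y => \big[Rplus/0]_x \big[Rplus/0]_x'
           (ind (p x) * ind (p x') * (phi x y * phi x' y)))) => [|y _]; last first.
  rewrite /= Rmult_1_r big_distrlr /=; apply: eq_bigr => x _; apply: eq_bigr => x' _.
  by rewrite /phi; ring.
rewrite exchange_big big_distrr /=; apply: rsum_le => x; rewrite exchange_big /=.
apply: (Rle_trans _ (\big[Rplus/0]_x' (ind (p x) * ind (p x') * (q * Q * ind (x == x'))))).
  apply: rsum_le => x'; rewrite -big_distrr /=; apply: Rmult_le_compat_l.
    by apply: Rmult_le_pos; apply: ind_ge0.
  exact: level_correlation.
rewrite (bigD1 x) //= big1 => [|x' nx'x]; last by rewrite eq_sym (negbTE nx'x) /=; ring.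
by rewrite eqxx /=; right; rewrite ind_idem; ring.
Qed.

End LevelSets.

Section CoordinateUpdate.
Variables (V : finZmodType) (k : nat).
Implicit Types (a b : {ffun 'I_k -> V}) (i j : 'I_k).

Definition upd a i (x : V) : {ffun 'I_k -> V} := [ffun r => if r == i then x else a r].

Lemma upd_same a i x : upd a i x i = x.
Proof. by rewrite ffunE eqxx. Qed.

Lemma upd_other a i x r : r != i -> upd a i x r = a r.
Proof. by rewrite ffunE => /negbTE ->. Qed.

Lemma upd_comm a i j x y : i != j -> upd (upd a i x) j y = upd (upd a j y) i x.
Proof.
move=> nij; apply/ffunP => r; rewrite !ffunE.
by case: (eqVneq r j) => [->|//]; rewrite eq_sym (negbTE nij).
Qed.

Definition coord_free (f : {ffun 'I_k -> V} -> bool) i := forall a x, f (upd a i x) = f a.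

Lemma rsum_resample (G : {ffun 'I_k -> V} -> R) i :
  INR #|V| * \big[Rplus/0]_a G a = \big[Rplus/0]_a \big[Rplus/0]_(x : V) G (upd a i x).
Proof.
transitivity (\big[Rplus/0]_a \big[Rplus/0]_(c : V) G (upd a i (a i + c)%ring)); last first.
  by apply: eq_bigr => a _; rewrite [RHS](reindex_inj (addrI (a i))).
rewrite exchange_big /= -rsum_const; apply: eq_bigr => c _.
have shift_inj : injective (fun a => upd a i (a i + c)%ring).
  move=> a b /ffunP eq_ab; apply/ffunP => r; have := eq_ab r; rewrite !ffunE.
  by case: (eqVneq r i) => [->|//]; apply: addIr.
by rewrite [LHS](reindex_inj shift_inj).
Qed.

Lemma rsum_restrict_coord (f : {ffun 'I_k -> V} -> bool) i (S : {set V}) :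
  coord_free f i ->
  INR #|V| * \big[Rplus/0]_b ind (f b && (b i \in S)) = INR #|S| * \big[Rplus/0]_b ind (f b).
Proof.
move=> f_free; rewrite (rsum_resample _ i) big_distrr /=; apply: eq_bigr => a _.
rewrite -rsum_inset big_distrl /=; apply: eq_bigr => x _.
by rewrite f_free upd_same ind_andb Rmult_comm.
Qed.

End CoordinateUpdate.

Section Mixing.
Variables (F : finFieldType) (d k : nat) (B : 'rV[F]_d -> 'rV[F]_d -> F) (lam : F).
Hypothesis bil : is_bilinear_form B.
Hypothesis nd : is_nondegenerate B.
Hypothesis lam_neq0 : lam != 0%ring.

Let q := INR #|F|.
Let Q := INR #|'rV[F]_d|.

Lemma pair_constraint_mixing (f g : {ffun 'I_k -> 'rV[F]_d} -> bool) i j :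
  i != j -> coord_free f i -> coord_free g j ->
  Q * (\big[Rplus/0]_b (ind (f b && g b) * (q * ind (B (b i) (b j) == lam) - 1))) ^ 2
  <= q * \big[Rplus/0]_b ind (f b) * \big[Rplus/0]_b ind (g b).
Proof.
move=> nij f_free g_free; have nji : j != i by rewrite eq_sym.
have Q1 : 1 <= Q by apply: card_ge1 0%ring.
set phi := fun x y => q * ind (B x y == lam) - 1.
set h := fun a : {ffun 'I_k -> 'rV[F]_d} =>
  \big[Rplus/0]_x (ind (g (upd a i x)) * phi x (a j)).
set D := \big[Rplus/0]_b _.
have QD : Q * D = \big[Rplus/0]_a (ind (f a) * h a).
  rewrite /D (rsum_resample _ i); apply: eq_bigr => a _.
  rewrite /h big_distrr /=; apply: eq_bigr => x _.
  by rewrite f_free upd_same (upd_other _ _ nji) ind_andb Rmult_assoc.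
have sum_h2 : \big[Rplus/0]_a h a ^ 2 <= q * Q * \big[Rplus/0]_a ind (g a).
  apply: (Rmult_le_reg_l Q); first lra.
  have -> : Q * (q * Q * \big[Rplus/0]_a ind (g a)) =
            q * Q * (Q * \big[Rplus/0]_a ind (g a)) by ring.
  rewrite (rsum_resample _ j) (rsum_resample (fun a => ind (g a)) i) big_distrr /=.
  apply: rsum_le => a.
  rewrite (eq_bigr (fun y => (\big[Rplus/0]_x (ind (g (upd a i x)) * phi x y)) ^ 2))
    => [|y _]; first exact: level_variance.
  rewrite /h upd_same; congr (_ ^ 2); apply: eq_bigr => x _.
  by rewrite (upd_comm _ _ _ nji) g_free.
have fh2 : \big[Rplus/0]_a (ind (f a) * h a ^ 2) <= \big[Rplus/0]_a h a ^ 2.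
  by apply: rsum_le => a; have := ind_le1 (f a); have := pow2_ge_0 (h a); nra.
have CS := cauchy_schwarz h (fun a => ind_ge0 (f a)).
rewrite -QD in CS.
have f0 : 0 <= \big[Rplus/0]_a ind (f a) by apply: rsum_ge0 => a; apply: ind_ge0.
apply: (Rmult_le_reg_l Q); first lra.
have : Q * (Q * D ^ 2) <= \big[Rplus/0]_a ind (f a) * (q * Q * \big[Rplus/0]_a ind (g a)).
  have -> : Q * (Q * D ^ 2) = (Q * D) ^ 2 by ring.
  apply: (Rle_trans _ _ _ CS); apply: Rmult_le_compat_l => //; lra.
by move=> h_le; apply: (Rle_trans _ _ _ h_le); right; ring.
Qed.

End Mixing.

Definition touches (k : nat) (i : 'I_k) (e : 'I_k * 'I_k) := (e.1 == i) || (e.2 == i).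

(* In a valid edge set only e itself touches both endpoints of e, so the edges
   avoiding one endpoint or the other are exactly the edges other than e. *)
Lemma avoiding_edges_cover k (E : {set 'I_k * 'I_k}) e : valid_edges E -> e \in E ->
  [set f in E | ~~ touches e.1 f] :|: [set f in E | ~~ touches e.2 f] = E :\ e.
Proof.
move=> valid eE; have [nij eji] := valid e eE.
apply/setP => f; rewrite !inE; case fE: (f \in E); rewrite ?andbF ?andbT //=.
rewrite -negb_and; congr (~~ _); rewrite /touches.
case: e eE nij eji => i j eE /= nij eji; case: f fE => f1 f2 fE /=.
apply/idP/idP => [|/eqP[-> ->]]; last by rewrite !eqxx orbT.
case/andP => /orP [] /eqP fi /orP [] /eqP fj; subst.
- by rewrite eqxx in nij.
- by [].
- by rewrite fE in eji.
- by rewrite eqxx in nij.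
Qed.

Section Solutions.
Variables (F : finFieldType) (d k : nat) (B : 'rV[F]_d -> 'rV[F]_d -> F).
Variables (A : 'I_k -> {set 'rV[F]_d}) (lam : 'I_k * 'I_k -> F).
Implicit Types (b : {ffun 'I_k -> 'rV[F]_d}) (E : {set 'I_k * 'I_k}) (i j : 'I_k).

Definition in_boxes (J : pred 'I_k) b := [forall r, J r ==> (b r \in A r)].

Definition solves E b := [forall e in E, B (b e.1) (b e.2) == lam e].

Lemma num_solutionsE E :
  INR (num_solutions B E lam A) = \big[Rplus/0]_b ind (in_boxes predT b && solves E b).
Proof.
rewrite rsum_ind; congr INR; apply: eq_card => b.
by rewrite inE; congr andb; apply: eq_forallb => r.
Qed.

Lemma in_boxes_free J i : ~~ J i -> coord_free (in_boxes J) i.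
Proof.
move=> nJi b x; apply: eq_forallb => r; case: (eqVneq r i) => [->|nri].
  by rewrite (negbTE nJi).
by rewrite upd_other.
Qed.

Lemma solves_free E i : (forall e, e \in E -> ~~ touches i e) -> coord_free (solves E) i.
Proof.
move=> avoid b x; apply: eq_forallb_in => e eE.
by have := avoid e eE; rewrite negb_or => /andP [n1 n2]; rewrite !upd_other.
Qed.

Lemma solvesU E1 E2 b : solves (E1 :|: E2) b = solves E1 b && solves E2 b.
Proof.
apply/forall_inP/andP => [sol|[/forall_inP sol1 /forall_inP sol2] e].
  by split; apply/forall_inP => e eE; apply: sol; rewrite inE eE ?orbT.
by rewrite inE => /orP [] eE; [apply: sol1 | apply: sol2].
Qed.

Lemma solvesD1 E e b : e \in E ->
  solves E b = solves (E :\ e) b && (B (b e.1) (b e.2) == lam e).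
Proof.
move=> eE; apply/forall_inP/andP => [sol|[/forall_inP sol' sol_e] f fE].
  by split; [apply/forall_inP => f /setD1P [_ /sol] | apply: sol].
by case: (eqVneq f e) => [->//|nfe]; apply: sol'; rewrite !inE nfe.
Qed.

Lemma in_boxes_split i b :
  in_boxes predT b = in_boxes (predC1 i) b && (b i \in A i).
Proof.
apply/forallP/andP => [inA|[/forallP inA Ai] r].
  by split; [apply/forallP => r; apply/implyP => _ |]; apply: (implyP (inA _)).
by case: (eqVneq r i) => [->//|nri]; have := inA r; rewrite /= nri.
Qed.

Lemma in_boxes_cover i j b : i != j ->
  in_boxes predT b = in_boxes (predC1 i) b && in_boxes (predC1 j) b.
Proof.
move=> nij; apply/forallP/andP => [inA|[/forallP inAi /forallP inAj] r].
  by split; apply/forallP => r; apply/implyP => _; apply: inA.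
case: (eqVneq r i) => [->|nri]; first by have := inAj i; rewrite /= nij.
by have := inAi r; rewrite /= nri.
Qed.

End Solutions.

Section EdgeRemoval.
Variables (F : finFieldType) (d k : nat) (B : 'rV[F]_d -> 'rV[F]_d -> F).
Variables (A : 'I_k -> {set 'rV[F]_d}) (lam : 'I_k * 'I_k -> F).
Hypothesis bil : is_bilinear_form B.
Hypothesis nd : is_nondegenerate B.

Let q := INR #|F|.
Let Q := INR #|'rV[F]_d|.
Let N (E : {set 'I_k * 'I_k}) := INR (num_solutions B E lam A).

Lemma edge_removal_bound (E : {set 'I_k * 'I_k}) e :
  valid_edges E -> e \in E -> lam e != 0%ring ->
  INR #|A e.1| * INR #|A e.2| * (q * N E - N (E :\ e)) ^ 2
  <= q * Q * N [set f in E | ~~ touches e.1 f] * N [set f in E | ~~ touches e.2 f].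
Proof.
move=> valid eE lam_e; have [nij _] := valid e eE.
set i := e.1 in nij *; set j := e.2 in nij *.
set Ei := [set f in E | ~~ touches i f]; set Ej := [set f in E | ~~ touches j f].
pose f b := in_boxes A (predC1 i) b && solves B lam Ei b.
pose g b := in_boxes A (predC1 j) b && solves B lam Ej b.
have avoid X r : forall h, h \in [set h in X | ~~ touches r h] -> ~~ touches r h.
  by move=> h; rewrite inE => /andP [].
have f_free : coord_free f i.
  by move=> b x; rewrite /f in_boxes_free /= ?eqxx // solves_free //; apply: avoid.
have g_free : coord_free g j.
  by move=> b x; rewrite /g in_boxes_free /= ?eqxx // solves_free //; apply: avoid.
have count_f : Q * N Ei = INR #|A i| * \big[Rplus/0]_b ind (f b).
  rewrite /N num_solutionsE -(rsum_restrict_coord _ f_free); congr (_ * _).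
  by apply: eq_bigr => b _; rewrite (in_boxes_split _ i) andbAC.
have count_g : Q * N Ej = INR #|A j| * \big[Rplus/0]_b ind (g b).
  rewrite /N num_solutionsE -(rsum_restrict_coord _ g_free); congr (_ * _).
  by apply: eq_bigr => b _; rewrite (in_boxes_split _ j) andbAC.
have defect : q * N E - N (E :\ e) = \big[Rplus/0]_b
    (ind (f b && g b) * (q * ind (B (b i) (b j) == lam e) - 1)).
  rewrite /N !num_solutionsE big_distrr /= -rsum_sub; apply: eq_bigr => b _.
  have fg : f b && g b = in_boxes A predT b && solves B lam (E :\ e) b.
    by rewrite (in_boxes_cover A b nij) -(avoiding_edges_cover valid eE) solvesU andbACA.
  by rewrite (solvesD1 B lam b eE) fg andbA !ind_andb /i /j; ring.
have mixing := pair_constraint_mixing bil nd lam_e nij f_free g_free.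
rewrite -/q -/Q in mixing; rewrite defect.
set D := \big[Rplus/0]_b _ in mixing *.
have Q1 : 1 <= Q by apply: card_ge1 0%ring.
have Ai0 := pos_INR #|A i|; have Aj0 := pos_INR #|A j|.
apply: (Rmult_le_reg_l (Q * Q)); first nra.
have -> : Q * Q * (q * Q * N Ei * N Ej) = q * Q * (Q * N Ei) * (Q * N Ej) by ring.
rewrite count_f count_g.
apply: (Rle_trans _ (INR #|A i| * INR #|A j| * Q * (q * \big[Rplus/0]_b ind (f b) *
                                                  \big[Rplus/0]_b ind (g b)))).
  have -> : Q * Q * (INR #|A i| * INR #|A j| * D ^ 2) =
            INR #|A i| * INR #|A j| * Q * (Q * D ^ 2) by ring.
  by apply: Rmult_le_compat_l => //; apply: Rmult_le_pos; [nra | lra].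
by right; ring.
Qed.

End EdgeRemoval.

(* Arithmetic core of the inductive step: the defect D of one edge removal is at
   most 2 q M / C, given the bounds on the two edge-deleted systems (a = q^di,
   b = q^dj, h = q^2t, K = q^(d-1)) and the size assumption on the sets A_i. *)
Lemma defect_bound (q K C M Ni Nj Ai Aj D a b h : R) :
  0 <= q -> 0 < K -> 0 < C -> 0 <= M -> 0 <= a -> 0 <= b -> 0 < h -> a * b <= h ->
  0 <= Ni <= 2 * M * a -> 0 <= Nj <= 2 * M * b ->
  C ^ 2 * (K * h) <= Ai * Aj -> Ai * Aj * D ^ 2 <= q * (K * q) * Ni * Nj ->
  Rabs D <= 2 * q * M / C.
Proof.
move=> q0 K0 C0 M0 a0 b0 h0 abh [Ni0 Nile] [Nj0 Njle] Alarge key.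
have NN : Ni * Nj <= 4 * M ^ 2 * h.
  apply: (Rle_trans _ ((2 * M * a) * (2 * M * b))); first exact: Rmult_le_compat.
  have := pow2_ge_0 M; nra.
have CD : K * h * (C ^ 2 * D ^ 2) <= K * h * (2 * q * M) ^ 2.
  have D2 := pow2_ge_0 D; have qK : 0 <= q * (K * q) by nra.
  have := Rmult_le_compat_l _ _ _ qK NN; nra.
have CD2 : (C * D) ^ 2 <= (2 * q * M) ^ 2.
  have Kh : 0 < K * h by nra.
  by rewrite Rpow_mult_distr; apply: (Rmult_le_reg_l _ _ _ Kh).
have qM : 0 <= 2 * q * M by nra.
have CDabs : C * Rabs D <= 2 * q * M.
  rewrite -{1}(Rabs_pos_eq C (Rlt_le _ _ C0)) -Rabs_mult -(Rabs_pos_eq _ qM).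
  by apply: Rsqr_le_abs_0; rewrite /Rsqr; nra.
apply: (Rmult_le_reg_l C) => //.
by have -> : C * (2 * q * M / C) = 2 * q * M by field; lra.
Qed.

Lemma scaled_triangle (q N N' u a b : R) : 0 < q ->
  Rabs (q * N - N') <= q * a -> Rabs (N' - q * u) <= q * b -> Rabs (N - u) <= a + b.
Proof.
move=> q0 h1 h2; apply: (Rmult_le_reg_l q) => //.
have -> : q * Rabs (N - u) = Rabs ((q * N - N') + (N' - q * u)).
  by rewrite -{1}(Rabs_pos_eq q (Rlt_le _ _ q0)) -Rabs_mult; congr Rabs; ring.
by apply: Rle_trans (Rabs_triang _ _) _; lra.
Qed.

Lemma INR_expn m n : INR (expn m n) = INR m ^ n.
Proof. by elim: n => [|n IH] //; rewrite expnS mult_INR IH. Qed.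

Lemma valid_edges_sub k (E E' : {set 'I_k * 'I_k}) :
  E' \subset E -> valid_edges E -> valid_edges E'.
Proof.
move=> sub valid e eE'; have [ne nrev] := valid e (subsetP sub e eE').
by split=> //; apply: contra nrev; apply: (subsetP sub).
Qed.

Lemma card_avoid_touch k (E : {set 'I_k * 'I_k}) i :
  (#|[set f in E | ~~ touches i f]| + #|[set f in E | touches i f]|)%nat = #|E|.
Proof.
rewrite -(cardsID [set f | touches i f] E) addnC.
by congr addn; apply: eq_card => f; rewrite !inE andbC.
Qed.

Lemma num_solutions_set0 (F : finFieldType) (d k : nat) (B : 'rV[F]_d -> 'rV[F]_d -> F)
    (A : 'I_k -> {set 'rV[F]_d}) (lam : 'I_k * 'I_k -> F) :
  num_solutions B set0 lam A = (\prod_(i < k) #|A i|)%nat.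
Proof.
rewrite /num_solutions (eq_card (B := finfun.family (fun i => mem (A i)))) => [|a].
  by rewrite card_family foldrE big_map big_enum.
rewrite inE; apply/andP/familyP => [[/forallP inA _] i|inA]; first exact: inA.
by split; [apply/forallP | apply/forall_inP => e; rewrite inE].
Qed.

Section CountingBound.
Variables (F : finFieldType) (d k t : nat) (E : {set 'I_k * 'I_k}).
Variables (B : 'rV[F]_d -> 'rV[F]_d -> F) (A : 'I_k -> {set 'rV[F]_d}).
Variables (lam : 'I_k * 'I_k -> F) (C : R).
Hypothesis valid : valid_edges E.
Hypothesis deg_le : forall i, (edge_deg E i <= t)%nat.
Hypothesis bil : is_bilinear_form B.
Hypothesis nd : is_nondegenerate B.
Hypothesis lam_neq0 : forall e, e \in E -> lam e != 0%ring.
Hypothesis d_gt0 : (0 < d)%nat.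
Hypothesis C_gt0 : 0 < C.
Hypothesis C_large : 2 * INR #|E| <= C.
Hypothesis A_large : forall i j,
  C ^ 2 * (INR #|F| ^ d.-1 * (INR #|F| ^ t) ^ 2) <= INR #|A i| * INR #|A j|.

Implicit Types (X : {set 'I_k * 'I_k}) (e : 'I_k * 'I_k).

Let q := INR #|F|.
Let P := INR (\prod_(i < k) #|A i|).
Let N X := INR (num_solutions B X lam A).
Let M X := P / q ^ #|X|.
Let good X := Rabs (N X - M X) <= 2 * INR #|X| / C * M X.

Let q_ge1 : 1 <= q. Proof. exact: card_ge1 0%ring. Qed.

Let M_ge0 X : 0 <= M X.
Proof.
by apply: Rmult_le_pos; [apply: pos_INR | apply/Rlt_le/Rinv_0_lt_compat/pow_lt; lra].
Qed.

Lemma good_set0 : good set0.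
Proof.
rewrite /good /N /M num_solutions_set0 cards0 -/P /=.
have -> : P - P / 1 = 0 by field.
by rewrite Rabs_R0; right; field; lra.
Qed.

Lemma good_le_twice X : X \subset E -> good X -> N X <= 2 * M X.
Proof.
move=> sub gX; have ratio : 2 * INR #|X| / C <= 1.
  have : INR #|X| <= INR #|E| by apply/le_INR/leP/subset_leq_card.
  by move=> XE; apply: (Rmult_le_reg_r C) => //; field_simplify; lra.
have := Rle_abs (N X - M X); have := Rmult_le_compat_r _ _ _ (M_ge0 X) ratio.
by move: gX; rewrite /good; lra.
Qed.

Lemma expected_avoiding (E' : {set 'I_k * 'I_k}) r : E' \subset E ->
  exists2 dr, (dr <= t)%nat & M [set f in E' | ~~ touches r f] = M E' * q ^ dr.
Proof.
move=> sub; exists #|[set f in E' | touches r f]|.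
  apply: leq_trans (deg_le r); apply/subset_leq_card/subsetP => f.
  by rewrite !inE => /andP [/(subsetP sub) ->].
have q_neq0 n : q ^ n <> 0 by apply: pow_nonzero; lra.
by rewrite /M -(card_avoid_touch E' r) pow_add; field; split.
Qed.

Lemma card_vectors : INR #|'rV[F]_d| = q ^ d.-1 * q.
Proof. by rewrite card_mx mul1n INR_expn -/q -{1}(prednK d_gt0) /= Rmult_comm. Qed.

Lemma good_step (E' : {set 'I_k * 'I_k}) e : E' \subset E -> e \in E' ->
  good (E' :\ e) -> good [set f in E' | ~~ touches e.1 f] ->
  good [set f in E' | ~~ touches e.2 f] -> good E'.
Proof.
move=> sub eE' good_rm good_i good_j.
have q_gt0 : 0 < q by lra.
have avoid_sub r : [set f in E' | ~~ touches r f] \subset E.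
  by apply: subset_trans sub; apply/subsetP => f; rewrite inE => /andP [].
have [di di_t Mi] := expected_avoiding e.1 sub.
have [dj dj_t Mj] := expected_avoiding e.2 sub.
have key := edge_removal_bound A bil nd (valid_edges_sub sub valid) eE'
  (lam_neq0 (subsetP sub _ eE')).
rewrite card_vectors in key.
have defect : Rabs (q * N E' - N (E' :\ e)) <= q * (2 * M E' / C).
  have -> : q * (2 * M E' / C) = 2 * q * M E' / C by field; lra.
  apply: (defect_bound (K := q ^ d.-1) (a := q ^ di) (b := q ^ dj) (h := (q ^ t) ^ 2))
    (A_large e.1 e.2) key; try by apply: pow_lt.
  - exact: pos_INR.
  - exact: C_gt0.
  - exact: M_ge0.
  - by apply: pow_le; lra.
  - by apply: pow_le; lra.
  - by apply: pow_lt; apply: pow_lt.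
  - rewrite /= Rmult_1_r; apply: Rmult_le_compat; try (apply: pow_le; lra).
      by apply: Rle_pow => //; apply/leP.
    by apply: Rle_pow => //; apply/leP.
  - split; first exact: pos_INR.
    by rewrite Rmult_assoc -Mi; apply: good_le_twice (avoid_sub _) good_i.
  - split; first exact: pos_INR.
    by rewrite Rmult_assoc -Mj; apply: good_le_twice (avoid_sub _) good_j.
have M_rm : M (E' :\ e) = q * M E'.
  rewrite /M (cardsD1 e E') eE' add1n /=; set n := #|E' :\ e|.
  by field; split; [apply: pow_nonzero |]; lra.
have rm : Rabs (N (E' :\ e) - q * M E') <= q * (2 * INR #|E' :\ e| / C * M E').
  by move: good_rm; rewrite /good M_rm; lra.
apply: Rle_trans (scaled_triangle q_gt0 defect rm) _.
rewrite /good (cardsD1 e E') eE' add1n S_INR; set n := INR #|E' :\ e|.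
by right; field; lra.
Qed.

Lemma good_sub (E' : {set 'I_k * 'I_k}) : E' \subset E -> good E'.
Proof.
move: {2}#|E'| (leqnn #|E'|) => n; elim: n E' => [|n IH] E' size_le sub.
  by move: size_le; rewrite leqn0 cards_eq0 => /eqP ->; apply: good_set0.
have [->|[e eE']] := set_0Vmem E'; first exact: good_set0.
have proper X : X \subset E' -> e \notin X -> (#|X| <= n)%nat.
  move=> XE' eX; rewrite -ltnS; apply: leq_trans size_le.
  by apply: proper_card; apply/properP; split=> //; exists e.
have sub' X : X \subset E' -> X \subset E by move/subset_trans; apply.
have avoid_sub r : [set f in E' | ~~ touches r f] \subset E'.
  by apply/subsetP => f; rewrite inE => /andP [].
have avoid_e r : (r == e.1) || (r == e.2) -> e \notin [set f in E' | ~~ touches r f].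
  by rewrite inE /touches => /orP [] /eqP ->; rewrite eqxx ?orbT andbF.
have rm_sub : E' :\ e \subset E' by apply: subD1set.
apply: (good_step sub eE'); apply: IH.
- by apply: proper rm_sub _; rewrite setD11.
- exact: sub' rm_sub.
- by apply: proper (avoid_sub _) (avoid_e _ _); rewrite eqxx.
- exact: sub' (avoid_sub _).
- by apply: proper (avoid_sub _) (avoid_e _ _); rewrite eqxx orbT.
- exact: sub' (avoid_sub _).
Qed.

End CountingBound.

(* Squaring the size hypothesis |A_i| >= C q^((d-1)/2 + t) of the theorem gives the
   pairwise form |A_i| |A_j| >= C^2 q^(d-1) (q^t)^2 used in the counting bound. *)
Lemma threshold_pairs (q C a b : R) (d t : nat) : 0 < q -> (0 < d)%nat -> 0 < C ->
  C * Rpower q ((INR d - 1) / 2 + INR t) <= a ->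
  C * Rpower q ((INR d - 1) / 2 + INR t) <= b ->
  C ^ 2 * (q ^ d.-1 * (q ^ t) ^ 2) <= a * b.
Proof.
move=> q_gt0 d_gt0 C_gt0; set r := Rpower _ _ => Ca Cb.
have -> : q ^ d.-1 * (q ^ t) ^ 2 = r ^ 2.
  rewrite /r /= !Rmult_1_r -!Rpower_plus -!Rpower_pow // -!Rpower_plus; congr Rpower.
  by rewrite -{2 3}(prednK d_gt0) S_INR; field.
have Cr : 0 <= C * r by apply: Rmult_le_pos; [lra | apply/Rlt_le/exp_pos].
have -> : C ^ 2 * r ^ 2 = (C * r) * (C * r) by ring.
exact: Rmult_le_compat.
Qed.

(* The constant of the theorem: C = 2 (L + 1) / min(eps, 1) is at least 2 L and makes
   the relative error 2 L / C at most eps. *)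
Lemma constant_choice (L eps : R) : 0 <= L -> 0 < eps ->
  0 < 2 * (L + 1) / Rmin eps 1 /\ 2 * L <= 2 * (L + 1) / Rmin eps 1 /\
  2 * L / (2 * (L + 1) / Rmin eps 1) <= eps.
Proof.
move=> L_ge0 eps_gt0.
have mu_gt0 : 0 < Rmin eps 1 by apply: Rmin_pos; lra.
have [mu_le_eps mu_le1] := (Rmin_l eps 1, Rmin_r eps 1).
set mu := Rmin eps 1 in mu_gt0 mu_le_eps mu_le1 *; set C := 2 * (L + 1) / mu.
have C_gt0 : 0 < C by apply: Rmult_lt_0_compat; [lra | apply: Rinv_0_lt_compat].
have ratio : 2 * L / C <= mu.
  have -> : 2 * L / C = mu * (L / (L + 1)) by rewrite /C; field; lra.
  have frac : L / (L + 1) <= 1.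
    by apply: (Rmult_le_reg_r (L + 1)); [lra | rewrite /Rdiv Rmult_assoc Rinv_l; lra].
  by have := Rmult_le_compat_l _ _ _ (Rlt_le _ _ mu_gt0) frac; lra.
split=> //; split; last lra.
have -> : 2 * L = 2 * L / C * C by field; lra.
have := Rmult_le_compat_r _ _ _ (Rlt_le _ _ C_gt0) ratio.
by have := Rmult_le_compat_r _ _ _ (Rlt_le _ _ C_gt0) mu_le1; lra.
Qed.

Theorem theorem1p1 (d k t : nat) (E : {set 'I_k * 'I_k}) :
  (1 <= d)%N -> (2 <= k)%N -> (1 <= t)%N -> (t <= k - 1)%N ->
  valid_edges E ->
  (forall i : 'I_k, (edge_deg E i <= t)%N) ->
  forall eps : R, (0 < eps)%R ->
  exists C : R, (0 < C)%R /\
    forall (F : finFieldType) (B : 'rV[F]_d -> 'rV[F]_d -> F)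
           (A : 'I_k -> {set 'rV[F]_d}) (lam : 'I_k * 'I_k -> F),
      is_bilinear_form B -> is_nondegenerate B ->
      (forall i, (C * Rpower (INR #|F|) ((INR d - 1) / 2 + INR t)
                   <= INR #|A i|)%R) ->
      (forall e, e \in E -> lam e != GRing.zero) ->
      (Rabs (INR (num_solutions B E lam A)
             - INR (\prod_(i < k) #|A i|) / INR #|F| ^ #|E|)
       <= eps * (INR (\prod_(i < k) #|A i|) / INR #|F| ^ #|E|))%R.
Proof.
move=> d_gt0 _ _ _ valid deg_le eps eps_gt0.
have [C_gt0 [C_large ratio]] := constant_choice (pos_INR #|E|) eps_gt0.
exists (2 * (INR #|E| + 1) / Rmin eps 1); split=> // F B A lam bil nd A_large lam_neq0.
have q_gt0 : 0 < INR #|F| by apply: Rlt_le_trans Rlt_0_1 (card_ge1 0%ring).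
have A_pairs i j := threshold_pairs q_gt0 d_gt0 C_gt0 (A_large i) (A_large j).
have := good_sub valid deg_le bil nd lam_neq0 d_gt0 C_gt0 C_large A_pairs (subxx E).
move/Rle_trans; apply; apply: Rmult_le_compat_r ratio.
by apply: Rmult_le_pos; [apply: pos_INR | apply/Rlt_le/Rinv_0_lt_compat/pow_lt].
Qed.
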